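(* Let $H_0$ satisfy TQO-1 and TQO-2 with parameter $L^*$. Fix an integer $1\le r\le L^*$ and operators $V_{r,A}$, $A\in\mathcal S(r)$, each Hermitian and supported on $A$, with $V_{r,A}P=PV_{r,A}=0$ and $\|V_{r,A}\|\le w$. Let $W(r)=\sum_{A\in\mathcal S(r)}V_{r,A}$. Then there is a constant $C$ independent of $L$, $r$ and $w$ such that $$\|W(r)\psi\|\le C\,w\,r^2\,\|H_0\psi\|\quad\text{for all }\psi\in\mathcal H .$$
   Context: Lattice $\Lambda=\mathbb Z_L\times\mathbb Z_L$ (periodic), each site a qudit of fixed finite dimension, $\mathcal H=\bigotimes_u\mathcal H_u$. $\mathcal S(r)$: set of $r\times r$ square blocks. $H_0=\sum_{A\in\mathcal S(2)}Q_A$ with $Q_A$ pairwise commuting projectors supported on $A$; $P=\prod_{A\in\mathcal S(2)}(I-Q_A)\neq0$ is the ground-space projector (ground energy $0$). For $B\in\mathcal S(r)$: $P_B=\prod_{A\in\mathcal S(2),A\subseteq B}(I-Q_A)$, $Q_B=I-P_B$. TQO-1: for every $A\in\mathcal S(r)$, $r\le L^*$, and every $O_A$ supported on $A$, $PO_AP=cP$ for some $c\in\mathbb C$. TQO-2: for every $A\in\mathcal S(r)$, $r\le L^*$, with $B\in\mathcal S(r+2)$ the square containing $A$ and its nearest neighbours, $O_AP=0$ implies $O_AP_B=0$ for $O_A$ supported on $A$. *)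

(* Quantum spin system on the periodic L x L lattice,
   qudits of dimension d, scalars in an arbitrary numClosedFieldType K
   (e.g. algC); operators are represented as matrices indexed by
   configurations (computational basis of the tensor product). *)
From HB Require Import structures.
From mathcomp Require Import all_boot all_order all_algebra.
Set Implicit Arguments. Unset Strict Implicit. Unset Printing Implicit Defensive.
Import Order.TTheory GRing.Theory Num.Theory.
Local Open Scope ring_scope.

Section Lattice.
Variables L d : nat.

Definition site := ('I_L * 'I_L)%type.
Definition conf := {ffun site -> 'I_d}.

Definition block (r x y : nat) : {set site} :=
  [set s : site | [exists i : 'I_r, exists j : 'I_r,
     (nat_of_ord s.1 == (x + i) %% L)%N && (nat_of_ord s.2 == (y + j) %% L)%N]].

Definition squares (r : nat) : {set {set site}} :=
  [set block r (nat_of_ord c.1) (nat_of_ord c.2) | c : site].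

Definition agree_on (A : {set site}) (s t : conf) : bool :=
  [forall x in A, s x == t x].
Definition agree_off (A : {set site}) (s t : conf) : bool :=
  [forall x in ~: A, s x == t x].
End Lattice.

Notation vec K L d := {ffun conf L d -> K}.
Notation op K L d := {ffun (conf L d * conf L d) -> K}.

Section Operators.
Variables (K : numClosedFieldType) (L d : nat).
Local Notation vec := (vec K L d).
Local Notation op := (op K L d).

Definition app (O : op) (v : vec) : vec :=
  [ffun s => \sum_(u : conf L d) O (s, u) * v u].
Definition mulo (O1 O2 : op) : op :=
  [ffun p => \sum_(u : conf L d) O1 (p.1, u) * O2 (u, p.2)].
Definition scalo (c : K) (O : op) : op := [ffun p => c * O p].
Definition ido : op := [ffun p => ((p.1 == p.2)%:R : K)].

Definition vnorm (v : vec) : K := sqrtC (\sum_(s : conf L d) `|v s| ^+ 2).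
Definition opnorm_le (O : op) (w : K) : Prop :=
  forall v : vec, vnorm (app O v) <= w * vnorm v.

Definition herm_op (O : op) : Prop := forall s t, O (s, t) = (O (t, s))^*.
Definition proj_op (O : op) : Prop := herm_op O /\ mulo O O = O.

(* O = O_A (x) I_{Lambda \ A} *)
Definition supported_on (A : {set site L}) (O : op) : Prop :=
  exists g : conf L d -> conf L d -> K,
    (forall s t, O (s, t) = (agree_off A s t)%:R * g s t) /\
    (forall s s' t t', agree_on A s s' -> agree_on A t t' -> g s t = g s' t').

Variable Q : {set site L} -> op.

Definition H0 : op := \sum_(A in squares L 2) Q A.
Definition Pgs : op := \big[mulo/ido]_(A in squares L 2) (ido - Q A).
Definition PB (B : {set site L}) : op :=
  \big[mulo/ido]_(A in squares L 2 | A \subset B) (ido - Q A).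

Definition TQO1 (Lstar : nat) : Prop :=
  forall r : nat, (r <= Lstar)%N -> forall A, A \in squares L r ->
  forall O : op, supported_on A O -> exists c : K, mulo (mulo Pgs O) Pgs = scalo c Pgs.

(* A = square with corner c; B = the (r+2)-square with corner c - (1,1),
   i.e. A together with its nearest neighbours *)
Definition TQO2 (Lstar : nat) : Prop :=
  forall r : nat, (r <= Lstar)%N -> forall c : site L,
  forall O : op, supported_on (block L r c.1 c.2) O ->
  mulo O Pgs = 0 ->
  mulo O (PB (block L (r + 2) (c.1 + L - 1) (c.2 + L - 1))) = 0.
End Operators.

From HB Require Import structures.
From mathcomp Require Import all_boot all_order all_algebra zify ring.
Set Implicit Arguments. Unset Strict Implicit. Unset Printing Implicit Defensive.
Import Order.TTheory GRing.Theory Num.Theory.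
Local Open Scope ring_scope.

(* Let B_A be the (r+2)-square around A and Q_(B_A) = I - P_(B_A).  TQO-2 turns
   V_A P = 0 into V_A = V_A Q_(B_A) = Q_(B_A) V_A, so |V_A psi|^2 <= w^2 <psi, Q_(B_A) psi>.
   Expand |W psi|^2 = sum_(A,A') <V_A psi, V_A' psi>.  The O(r^2) squares A' near A
   are handled by |<x, y>| <= |x|^2 + |y|^2.  When A' misses B_A, V_A and V_A'
   commute with each other and with both projections, so the cross term equals
   <V_A R psi, V_A' R psi> with R = Q_(B_A) Q_(B_A'), which is at most
   2 w^2 <psi, R psi>.  Both contributions are controlled by X = sum_A Q_(B_A):
   all Q_a commute, Q_B <= H_B = sum_(a in B) Q_a, and each 2-square lies in at
   most (r+3)^2 of the B_A, whence X <= (r+3)^2 H_0 and X^2 <= (r+3)^4 H_0^2. *)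

Section OperatorAlgebra.
Variables (K : numClosedFieldType) (L d : nat).
Local Notation vec := (vec K L d).
Local Notation op := (op K L d).
Local Notation mulo := (@mulo K L d).
Local Notation app := (@app K L d).
Local Notation ido := (@ido K L d).

Lemma muloA (X Y Z : op) : mulo (mulo X Y) Z = mulo X (mulo Y Z).
Proof.
apply/ffunP => -[s t]; rewrite !ffunE /=.
under eq_bigr do rewrite ffunE big_distrl.
under [RHS]eq_bigr do rewrite ffunE big_distrr.
rewrite exchange_big; apply: eq_bigr => u _; apply: eq_bigr => v _ /=.
by rewrite mulrA.
Qed.

Lemma mulo1 (X : op) : mulo X ido = X.
Proof.
apply/ffunP => -[s t]; rewrite !ffunE /= (bigD1 t) //= ffunE eqxx mulr1 big1 ?addr0 //.
by move=> u /negbTE ne; rewrite ffunE /= ne mulr0.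
Qed.

Lemma mul1o (X : op) : mulo ido X = X.
Proof.
apply/ffunP => -[s t]; rewrite !ffunE /= (bigD1 s) //= ffunE eqxx mul1r big1 ?addr0 //.
by move=> u ne; rewrite ffunE /= eq_sym (negbTE ne) mul0r.
Qed.

Lemma muloDl (X Y Z : op) : mulo (X + Y) Z = mulo X Z + mulo Y Z.
Proof.
apply/ffunP => -[s t]; rewrite !ffunE /= -big_split; apply: eq_bigr => u _.
by rewrite ffunE mulrDl.
Qed.

Lemma muloDr (X Y Z : op) : mulo X (Y + Z) = mulo X Y + mulo X Z.
Proof.
apply/ffunP => -[s t]; rewrite !ffunE /= -big_split; apply: eq_bigr => u _.
by rewrite ffunE mulrDr.
Qed.

Lemma muloNl (X Y : op) : mulo (- X) Y = - mulo X Y.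
Proof.
apply/ffunP => -[s t]; rewrite !ffunE /= -sumrN; apply: eq_bigr => u _.
by rewrite ffunE mulNr.
Qed.

Lemma muloNr (X Y : op) : mulo X (- Y) = - mulo X Y.
Proof.
apply/ffunP => -[s t]; rewrite !ffunE /= -sumrN; apply: eq_bigr => u _.
by rewrite ffunE mulrN.
Qed.

Lemma muloBl (X Y Z : op) : mulo (X - Y) Z = mulo X Z - mulo Y Z.
Proof. by rewrite muloDl muloNl. Qed.

Lemma muloBr (X Y Z : op) : mulo X (Y - Z) = mulo X Y - mulo X Z.
Proof. by rewrite muloDr muloNr. Qed.

Lemma mul0o (X : op) : mulo 0 X = 0.
Proof. by apply/ffunP => -[s t]; rewrite !ffunE big1 // => u _; rewrite ffunE mul0r. Qed.

Lemma mulo0 (X : op) : mulo X 0 = 0.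
Proof. by apply/ffunP => -[s t]; rewrite !ffunE big1 // => u _; rewrite ffunE mulr0. Qed.

Lemma muloMnl n (X Y : op) : mulo (X *+ n) Y = mulo X Y *+ n.
Proof. by elim: n => [|n IH]; rewrite ?mulr0n ?mul0o // !mulrS muloDl IH. Qed.

Lemma muloMnr n (X Y : op) : mulo X (Y *+ n) = mulo X Y *+ n.
Proof. by elim: n => [|n IH]; rewrite ?mulr0n ?mulo0 // !mulrS muloDr IH. Qed.

Lemma mulo_suml I (r : seq I) (P : pred I) (F : I -> op) (Y : op) :
  mulo (\sum_(i <- r | P i) F i) Y = \sum_(i <- r | P i) mulo (F i) Y.
Proof. by elim/big_rec2: _ => [|i a b _ <-]; rewrite ?mul0o ?muloDl. Qed.

Lemma mulo_sumr I (r : seq I) (P : pred I) (F : I -> op) (Y : op) :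
  mulo Y (\sum_(i <- r | P i) F i) = \sum_(i <- r | P i) mulo Y (F i).
Proof. by elim/big_rec2: _ => [|i a b _ <-]; rewrite ?mulo0 ?muloDr. Qed.

Lemma comm_compl (X Y : op) :
  mulo X Y = mulo Y X -> mulo X (ido - Y) = mulo (ido - Y) X.
Proof. by move=> h; rewrite muloBr muloBl mulo1 mul1o h. Qed.

Lemma proj_compl (X : op) : mulo X X = X -> mulo (ido - X) (ido - X) = ido - X.
Proof. by move=> h; rewrite muloBl !muloBr !mulo1 !mul1o h subrr subr0. Qed.

Lemma mulo_sandwich (V1 V2 Q1 Q2 : op) :
  mulo V1 Q1 = V1 -> mulo Q1 V1 = V1 -> mulo V2 Q2 = V2 -> mulo Q2 V2 = V2 ->
  mulo V1 V2 = mulo V2 V1 -> mulo V2 Q1 = mulo Q1 V2 ->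
  mulo V1 V2 = mulo (mulo Q1 Q2) (mulo (mulo V1 V2) (mulo Q1 Q2)).
Proof.
move=> VQ1 QV1 VQ2 QV2 V12 VQ21.
have r1 : mulo (mulo V1 V2) Q1 = mulo V1 V2 by rewrite muloA VQ21 -muloA VQ1.
have r2 : mulo (mulo V1 V2) Q2 = mulo V1 V2 by rewrite muloA VQ2.
have l1 : mulo Q1 (mulo V1 V2) = mulo V1 V2 by rewrite -muloA QV1.
have l2 : mulo Q2 (mulo V1 V2) = mulo V1 V2 by rewrite V12 -muloA QV2.
by rewrite -(muloA (mulo V1 V2)) r1 r2 muloA l2 l1.
Qed.

Definition prodo (s : seq op) : op := foldr mulo ido s.

Lemma prodo_cat s1 s2 : prodo (s1 ++ s2) = mulo (prodo s1) (prodo s2).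
Proof. by elim: s1 => [|X s IH] /=; rewrite ?mul1o // IH muloA. Qed.

Lemma bigmulo_prodo (I : finType) (P : pred I) (F : I -> op) :
  \big[mulo/ido]_(i | P i) F i = prodo [seq F i | i <- [seq i <- index_enum I | P i]].
Proof. by rewrite -big_filter; elim: [seq i <- _ | _] => [|i s IH]; rewrite ?big_nil ?big_cons ?IH. Qed.

Lemma comm_prodo (X : op) s : {in s, forall Y, mulo X Y = mulo Y X} ->
  mulo X (prodo s) = mulo (prodo s) X.
Proof.
elim: s => [|Y s IH] h /=; first by rewrite mulo1 mul1o.
rewrite -(muloA X) (h Y (mem_head _ _)) (muloA Y) IH ?(muloA Y) //.
by move=> Z hZ; apply: h; rewrite inE hZ orbT.
Qed.

Lemma app_mulo (X Y : op) v : app (mulo X Y) v = app X (app Y v).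
Proof.
apply/ffunP => s; rewrite !ffunE.
under eq_bigr do rewrite ffunE big_distrl.
under [RHS]eq_bigr do rewrite ffunE big_distrr.
rewrite exchange_big; apply: eq_bigr => u _; apply: eq_bigr => v' _ /=.
by rewrite mulrA.
Qed.

Lemma appD (X Y : op) v : app (X + Y) v = app X v + app Y v.
Proof.
by apply/ffunP => s; rewrite !ffunE -big_split; apply: eq_bigr => u _; rewrite ffunE mulrDl.
Qed.

Lemma app0 v : app 0 v = 0.
Proof. by apply/ffunP => s; rewrite !ffunE big1 // => u _; rewrite ffunE mul0r. Qed.

Lemma appMn n (X : op) v : app (X *+ n) v = app X v *+ n.
Proof. by elim: n => [|n IH]; rewrite ?mulr0n ?app0 // !mulrS appD IH. Qed.

Lemma app_sum I (r : seq I) (P : pred I) (F : I -> op) v :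
  app (\sum_(i <- r | P i) F i) v = \sum_(i <- r | P i) app (F i) v.
Proof. by elim/big_rec2: _ => [|i a b _ <-]; rewrite ?app0 ?appD. Qed.

Definition vdot (u v : vec) : K := \sum_s (u s)^* * v s.
Definition vnorm2 (v : vec) : K := \sum_s `|v s| ^+ 2.
Definition qform (psi : vec) (X : op) : K := vdot psi (app X psi).

Lemma vdotDr u v v' : vdot u (v + v') = vdot u v + vdot u v'.
Proof. by rewrite /vdot -big_split; apply: eq_bigr => s _; rewrite ffunE mulrDr. Qed.

Lemma vdot0r u : vdot u 0 = 0.
Proof. by rewrite /vdot big1 // => s _; rewrite ffunE mulr0. Qed.

Lemma vdotMnr u n v : vdot u (v *+ n) = vdot u v *+ n.
Proof. by elim: n => [|n IH]; rewrite ?mulr0n ?vdot0r // !mulrS vdotDr IH. Qed.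

Lemma vdot_sumr u I (r : seq I) (P : pred I) (F : I -> vec) :
  vdot u (\sum_(i <- r | P i) F i) = \sum_(i <- r | P i) vdot u (F i).
Proof. by elim/big_rec2: _ => [|i a b _ <-]; rewrite ?vdot0r ?vdotDr. Qed.

Lemma vdotC u v : vdot v u = (vdot u v)^*.
Proof.
by rewrite /vdot rmorph_sum; apply: eq_bigr => s _; rewrite rmorphM /= conjCK mulrC.
Qed.

Lemma vdot_suml u I (r : seq I) (P : pred I) (F : I -> vec) :
  vdot (\sum_(i <- r | P i) F i) u = \sum_(i <- r | P i) vdot (F i) u.
Proof. by rewrite vdotC vdot_sumr rmorph_sum; apply: eq_bigr => i _; rewrite [RHS]vdotC. Qed.

Lemma vnorm2E v : vnorm2 v = vdot v v.
Proof. by apply: eq_bigr => s _; rewrite normCKC. Qed.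

Lemma vnorm2_ge0 v : 0 <= vnorm2 v.
Proof. by apply: sumr_ge0 => s _; rewrite exprn_ge0. Qed.

Lemma norm_vdot_le u v : `|vdot u v| <= vnorm2 u + vnorm2 v.
Proof.
rewrite /vdot /vnorm2 -big_split /=.
apply: le_trans (ler_norm_sum _ _ _) _; apply: ler_sum => s _.
rewrite normrM norm_conjC.
have amgm (a b : K) : 0 <= a -> 0 <= b -> a * b <= a ^+ 2 + b ^+ 2.
  move=> a0 b0; have : 0 <= (a - b) ^+ 2 by rewrite -realEsqr realB ?ger0_real.
  rewrite sqrrB addrAC subr_ge0 => h; apply: le_trans h; rewrite mulr2n lerDl.
  exact: mulr_ge0.
exact: amgm.
Qed.

Lemma vnorm2_sum_le (I : finType) (P : pred I) (x : I -> vec) :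
  vnorm2 (\sum_(i | P i) x i) <= \sum_(i | P i) \sum_(j | P j) `|vdot (x i) (x j)|.
Proof.
rewrite -(ger0_norm (vnorm2_ge0 _)) vnorm2E vdot_suml.
under eq_bigr do rewrite vdot_sumr.
apply: le_trans (ler_norm_sum _ _ _) _; apply: ler_sum => i _; exact: ler_norm_sum.
Qed.

Lemma vnorm_le_sqr (c : K) u v : 0 <= c ->
  vnorm2 u <= c ^+ 2 * vnorm2 v -> vnorm u <= c * vnorm v.
Proof.
move=> c0 h; rewrite /vnorm -/(vnorm2 u) -/(vnorm2 v) -(sqrCK c0).
rewrite -sqrtCM ?nnegrE ?exprn_ge0 ?vnorm2_ge0 // ler_sqrtC ?nnegrE ?vnorm2_ge0 //.
by rewrite mulr_ge0 ?exprn_ge0 ?vnorm2_ge0.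
Qed.

Lemma opnorm_vnorm2 (X : op) (w : K) u : 0 <= w -> opnorm_le X w ->
  vnorm2 (app X u) <= w ^+ 2 * vnorm2 u.
Proof.
move=> w0 /(_ u); rewrite /vnorm -/(vnorm2 _) -/(vnorm2 u) => h.
have := @lerXn2r _ 2 _ _ _ _ h; rewrite !nnegrE sqrtC_ge0 vnorm2_ge0.
by rewrite mulr_ge0 ?sqrtC_ge0 ?vnorm2_ge0 // exprMn !sqrtCK => ->.
Qed.

Lemma qform_sum psi I (r : seq I) (P : pred I) (F : I -> op) :
  qform psi (\sum_(i <- r | P i) F i) = \sum_(i <- r | P i) qform psi (F i).
Proof. by rewrite /qform app_sum vdot_sumr. Qed.

Lemma qformD psi (X Y : op) : qform psi (X + Y) = qform psi X + qform psi Y.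
Proof. by rewrite /qform appD vdotDr. Qed.

Lemma qformMn psi (X : op) n : qform psi (X *+ n) = qform psi X *+ n.
Proof. by rewrite /qform appMn vdotMnr. Qed.

Lemma herm_vdot (X : op) u v : herm_op X -> vdot (app X u) v = vdot u (app X v).
Proof.
move=> hX; rewrite /vdot.
under eq_bigr do rewrite ffunE rmorph_sum big_distrl.
rewrite exchange_big; apply: eq_bigr => t _ /=.
rewrite ffunE big_distrr; apply: eq_bigr => s _ /=.
by rewrite rmorphM /= hX conjCK mulrCA mulrA.
Qed.

Lemma vnorm2_app_herm (X : op) : herm_op X ->
  forall psi, vnorm2 (app X psi) = qform psi (mulo X X).
Proof. by move=> hX psi; rewrite vnorm2E herm_vdot // /qform app_mulo. Qed.

Lemma vnorm2_app_proj (X : op) : proj_op X -> forall psi, vnorm2 (app X psi) = qform psi X.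
Proof. by case=> hX pX psi; rewrite vnorm2_app_herm // pX. Qed.

Definition adj (X : op) : op := [ffun p => (X (p.2, p.1))^*].

Lemma adj_herm (X : op) : herm_op X <-> adj X = X.
Proof.
split=> [hX | hX s t]; last by rewrite -{1}hX ffunE.
by apply/ffunP => -[s t]; rewrite ffunE /= -hX.
Qed.

Lemma adjK (X : op) : adj (adj X) = X.
Proof. by apply/ffunP => -[s t]; rewrite !ffunE /= conjCK. Qed.

Lemma adj_mulo (X Y : op) : adj (mulo X Y) = mulo (adj Y) (adj X).
Proof.
apply/ffunP => -[s t]; rewrite !ffunE /= rmorph_sum; apply: eq_bigr => u _.
by rewrite !ffunE /= rmorphM mulrC.
Qed.

Lemma adjD (X Y : op) : adj (X + Y) = adj X + adj Y.
Proof. by apply/ffunP => -[s t]; rewrite !ffunE /= rmorphD. Qed.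

Lemma adjN (X : op) : adj (- X) = - adj X.
Proof. by apply/ffunP => -[s t]; rewrite !ffunE /= rmorphN. Qed.

Lemma herm0 : herm_op (0 : op).
Proof. by move=> s t; rewrite !ffunE rmorph0. Qed.

Lemma herm1 : herm_op ido.
Proof. by move=> s t; rewrite !ffunE /= eq_sym; case: (_ == _); rewrite ?rmorph0 ?rmorph1. Qed.

Lemma herm_mulo (X Y : op) : herm_op X -> herm_op Y -> mulo X Y = mulo Y X ->
  herm_op (mulo X Y).
Proof. by move=> /adj_herm hX /adj_herm hY c; apply/adj_herm; rewrite adj_mulo hX hY. Qed.

Lemma hermD (X Y : op) : herm_op X -> herm_op Y -> herm_op (X + Y).
Proof. by move=> /adj_herm hX /adj_herm hY; apply/adj_herm; rewrite adjD hX hY. Qed.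

Lemma hermB (X Y : op) : herm_op X -> herm_op Y -> herm_op (X - Y).
Proof. by move=> /adj_herm hX /adj_herm hY; apply/adj_herm; rewrite adjD adjN hX hY. Qed.

Lemma herm_fixC (X Y : op) : herm_op X -> herm_op Y ->
  mulo Y X = Y -> mulo X Y = Y.
Proof.
by move=> /adj_herm hX /adj_herm hY e; rewrite -[LHS]adjK adj_mulo hX hY e hY.
Qed.

Lemma proj_op_compl (X : op) : proj_op X -> proj_op (ido - X).
Proof. by case=> hX pX; split; [apply: hermB herm1 hX | apply: proj_compl]. Qed.

Lemma proj_mulo (X Y : op) : proj_op X -> proj_op Y -> mulo X Y = mulo Y X ->
  proj_op (mulo X Y).
Proof.
move=> [hX pX] [hY pY] c; split; first exact: herm_mulo.
by rewrite (muloA X) -(muloA Y X) -c (muloA X Y) pY -muloA pX.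
Qed.

Lemma card_sum_le (T : finType) (P : pred T) (c : K) (k : nat) : 0 <= c ->
  (#|[set x | P x]| <= k)%N -> \sum_(x | P x) c <= c *+ k.
Proof.
move=> c0 hk; rewrite sumr_const; apply: ler_wpMn2l => //.
by apply: leq_trans hk; rewrite cardsE.
Qed.

Section PositiveCone.
Variable F : op -> Prop.
Hypothesis F_proj : forall X, F X -> proj_op X.
Hypothesis F_comm : forall X Y, F X -> F Y -> mulo X Y = mulo Y X.

(* Sums of products of commuting orthogonal projections.  Every operator the
   argument compares is of this form, so positivity can be proved by induction
   instead of spectral theory. *)
Inductive pcone : op -> Prop :=
| pcone0 : pcone 0
| pconeD X Y : pcone X -> pcone Y -> pcone (X + Y)
| pcone_prod s : {in s, forall X, F X} -> pcone (prodo s).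

Lemma prodo_comm s1 s2 : {in s1, forall X, F X} -> {in s2, forall X, F X} ->
  mulo (prodo s1) (prodo s2) = mulo (prodo s2) (prodo s1).
Proof.
move=> h1 h2; have c1 X : F X -> mulo X (prodo s2) = mulo (prodo s2) X.
  by move=> hX; apply: comm_prodo => Y /h2; apply: F_comm.
by apply: esym; apply: comm_prodo => X /h1 /c1.
Qed.

Lemma prodo_proj s : {in s, forall X, F X} -> proj_op (prodo s).
Proof.
elim: s => [|X s IH] h /=; first by split; [exact: herm1 | rewrite mulo1].
have hX : F X by apply: h; rewrite inE eqxx.
have hs : {in s, forall X, F X} by move=> Z hZ; apply: h; rewrite inE hZ orbT.
apply: proj_mulo; [exact: F_proj | exact: IH |].
by apply: comm_prodo => Y /hs; apply: F_comm.
Qed.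

Lemma pcone_F X : F X -> pcone X.
Proof.
by move=> hX; rewrite -[X]mulo1; apply: (pcone_prod (s := [:: X])) => Y /[!inE] /eqP ->.
Qed.

Lemma pconeMn X n : pcone X -> pcone (X *+ n).
Proof. by move=> hX; elim: n => [|n IH]; rewrite ?mulr0n ?mulrS; constructor. Qed.

Lemma pcone_sum I (r : seq I) (P : pred I) (G : I -> op) :
  (forall i, P i -> pcone (G i)) -> pcone (\sum_(i <- r | P i) G i).
Proof. by move=> h; elim/big_rec: _ => [|i x Pi hx]; constructor; auto. Qed.

Lemma pconeM X Y : pcone X -> pcone Y -> pcone (mulo X Y).
Proof.
move=> hX; elim: hX Y => [|X1 X2 _ IH1 _ IH2|s hs] Y hY.
- by rewrite mul0o; constructor.
- by rewrite muloDl; constructor; auto.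
- elim: hY => [|Y1 Y2 _ IH3 _ IH4|s2 hs2].
  + by rewrite mulo0; constructor.
  + by rewrite muloDr; constructor.
  + rewrite -prodo_cat; constructor => Z; rewrite mem_cat => /orP [];
      [exact: hs | exact: hs2].
Qed.

Lemma pcone_herm X : pcone X -> herm_op X.
Proof.
elim => [|X1 X2 _ h1 _ h2|s hs]; [exact: herm0 | exact: hermD |].
by case: (prodo_proj hs).
Qed.

Lemma pcone_comm X Y : pcone X -> pcone Y -> mulo X Y = mulo Y X.
Proof.
move=> hX; elim: hX Y => [|X1 X2 _ IH1 _ IH2|s hs] Y hY.
- by rewrite mul0o mulo0.
- by rewrite muloDl muloDr IH1 // IH2.
- elim: hY => [|Y1 Y2 _ IH3 _ IH4|s2 hs2].
  + by rewrite mul0o mulo0.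
  + by rewrite muloDl muloDr IH3 IH4.
  + exact: prodo_comm.
Qed.

Lemma pcone_qform_ge0 X psi : pcone X -> 0 <= qform psi X.
Proof.
elim => [|X1 X2 _ h1 _ h2|s hs]; first by rewrite /qform app0 vdot0r.
  by rewrite qformD addr_ge0.
by rewrite -(vnorm2_app_proj (prodo_proj hs)) vnorm2_ge0.
Qed.

Lemma qform_le_addr X D psi : pcone D -> qform psi X <= qform psi (X + D).
Proof. by move=> hD; rewrite qformD lerDl pcone_qform_ge0. Qed.

Lemma vnorm2_le_addr X D psi : pcone X -> pcone D ->
  vnorm2 (app X psi) <= vnorm2 (app (X + D) psi).
Proof.
move=> hX hD; have hXh := pcone_herm hX.
have hXDh : herm_op (X + D) by apply: pcone_herm; constructor.
rewrite !vnorm2_app_herm // muloDl !muloDr -addrA.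
by apply: qform_le_addr; do ![apply: pconeD | apply: pconeM].
Qed.

End PositiveCone.
End OperatorAlgebra.

Section Support.
Variables (K : numClosedFieldType) (L d : nat).
Local Notation op := (op K L d).
Local Notation mulo := (@mulo K L d).
Local Notation conf := (conf L d).

Definition mix (A : {set site L}) (s t : conf) : conf :=
  [ffun x => if x \in A then s x else t x].

Lemma agree_offP (A : {set site L}) (s t : conf) :
  reflect (forall x, x \notin A -> s x = t x) (agree_off A s t).
Proof.
apply: (iffP forallP) => h x; last by apply/implyP; rewrite inE => nx; apply/eqP/h.
by move=> nx; have /implyP := h x; rewrite inE nx => /(_ isT) /eqP.
Qed.

Lemma agree_onP (A : {set site L}) (s t : conf) :
  reflect (forall x, x \in A -> s x = t x) (agree_on A s t).
Proof.
apply: (iffP forallP) => h x; last by apply/implyP => xA; apply/eqP/h.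
by move=> xA; have /implyP := h x; rewrite xA => /(_ isT) /eqP.
Qed.

Lemma sum_conf_single (f : conf -> K) u0 : (forall u, f u != 0 -> u = u0) ->
  \sum_u f u = f u0.
Proof.
move=> h; rewrite (bigD1 u0) //= big1 ?addr0 // => u ne.
by apply/eqP; apply: contraR ne => /h ->.
Qed.

(* In the product, the only intermediate configuration that contributes takes
   the A1-part of [t] and the rest of [s]; for [mulo Y X] it is the one taking
   the A2-part of [t].  Locality of the kernels identifies the two products. *)
Lemma supported_disjoint_comm (A1 A2 : {set site L}) (X Y : op) :
  supported_on A1 X -> supported_on A2 Y -> A1 :&: A2 = set0 ->
  mulo X Y = mulo Y X.
Proof.
move=> [g1 [hX hg1]] [g2 [hY hg2]] dis.
have n12 x : x \in A1 -> x \notin A2.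
  by move=> x1; apply/negP => x2; have := in_set0 x; rewrite -dis inE x1 x2.
have n21 x : x \in A2 -> x \notin A1 by apply: contraTN => /n12.
have single (B1 B2 : {set site L}) (h1 h2 : conf -> conf -> K) (s t : conf) :
    (forall x, x \in B1 -> x \notin B2) ->
    \sum_u (agree_off B1 s u)%:R * h1 s u * ((agree_off B2 u t)%:R * h2 u t) =
    (agree_off B1 s (mix B1 t s))%:R * h1 s (mix B1 t s) *
    ((agree_off B2 (mix B1 t s) t)%:R * h2 (mix B1 t s) t).
  move=> nB; apply: sum_conf_single => u.
  have [/agree_offP e1|] := boolP (agree_off B1 s u); last by rewrite !mul0r eqxx.
  have [/agree_offP e2 _|] := boolP (agree_off B2 u t); last by rewrite mul0r mulr0 eqxx.
  apply/ffunP => x; rewrite ffunE; case: ifP => xB1; first exact/e2/nB.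
  by rewrite e1 // xB1.
apply/ffunP => -[s t]; rewrite !ffunE /=.
under eq_bigr do rewrite hX hY.
under [RHS]eq_bigr do rewrite hY hX.
rewrite (single A1 A2) // (single A2 A1) //.
set u0 := mix A1 t s; set u1 := mix A2 t s.
have e1 : agree_off A1 s u0 by apply/agree_offP => x nx; rewrite ffunE (negbTE nx).
have e2 : agree_off A2 s u1 by apply/agree_offP => x nx; rewrite ffunE (negbTE nx).
have e3 : agree_off A2 u0 t = agree_off A1 u1 t.
  apply/agree_offP/agree_offP => h x nx; rewrite ffunE.
  - by case: ifP => // x2; move: (h x); rewrite ffunE (negbTE nx) x2 => ->.
  - by case: ifP => // x1; move: (h x); rewrite ffunE (negbTE nx) x1 => ->.
rewrite e1 e2 e3 (hg1 s u1 u0 t); last 2 first.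
- by apply/agree_onP => x x1; rewrite ffunE (negbTE (n12 _ x1)).
- by apply/agree_onP => x x1; rewrite ffunE x1.
rewrite (hg2 u0 s t u1); last 2 first.
- by apply/agree_onP => x x2; rewrite ffunE (negbTE (n21 _ x2)).
- by apply/agree_onP => x x2; rewrite ffunE x2.
by ring.
Qed.

End Support.

Section Geometry.
Local Open Scope nat_scope.
Variable L : nat.

Lemma card_cyclic_offsets_meet (e x p q : nat) :
  #|[set c : 'I_L | [exists i : 'I_p, exists j : 'I_q,
      (c + e + i) %% L == (x + j) %% L]]| <= p + q.
Proof.
have [L0 | Lpos] := posnP L.
  by apply: leq_trans (max_card _) _; rewrite card_ord L0.
pose h (k : 'I_(p + q)) : 'I_L := Ordinal (ltn_pmod (x + k + L * (e + p) - (e + p)) Lpos).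
apply: leq_trans (_ : #|h @: [set: 'I_(p + q)]| <= _); last first.
  by rewrite (leq_trans (leq_imset_card _ _)) // cardsT card_ord.
apply: subset_leq_card; apply/subsetP => c.
rewrite inE => /existsP [i /existsP [j /eqP hij]].
have ip : i <= p by apply: ltnW.
have kp : j + p - i < p + q by have := ltn_ord j; lia.
apply/imsetP; exists (Ordinal kp); first by rewrite inE.
apply: val_inj => /=.
rewrite -(modn_small (ltn_ord c)); apply/eqP; rewrite -(eqn_modDr (e + p)).
have LL : e + p <= L * (e + p) by rewrite leq_pmull.
rewrite subnK; last by rewrite (leq_trans LL) // leq_addl.
rewrite [x + _ + _]addnC [L * _]mulnC modnMDl.
have -> : c + (e + p) = (c + e + i) + (p - i) by lia.
by rewrite -modnDml hij modnDml -addnA addnBA.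
Qed.

Lemma block_meet (p q x y x' y' : nat) (s : site L) :
  s \in block L p x y -> s \in block L q x' y' ->
  [exists i : 'I_p, exists j : 'I_q, (x + i) %% L == (x' + j) %% L] &&
  [exists i : 'I_p, exists j : 'I_q, (y + i) %% L == (y' + j) %% L].
Proof.
rewrite !inE => /existsP [i1 /existsP [j1 /andP [/eqP h1 /eqP h2]]].
move=> /existsP [i2 /existsP [j2 /andP [/eqP h3 /eqP h4]]].
apply/andP; split; apply/existsP.
  by exists i1; apply/existsP; exists i2; rewrite -h1 -h3.
by exists j1; apply/existsP; exists j2; rewrite -h2 -h4.
Qed.

Lemma card_blocks_meet (e p q x y : nat) :
  #|[set c : site L | block L p (c.1 + e) (c.2 + e) :&: block L q x y != set0]|
    <= (p + q) ^ 2.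
Proof.
set S1 := [set c : 'I_L | [exists i : 'I_p, exists j : 'I_q, (c + e + i) %% L == (x + j) %% L]].
set S2 := [set c : 'I_L | [exists i : 'I_p, exists j : 'I_q, (c + e + i) %% L == (y + j) %% L]].
apply: leq_trans (_ : #|setX S1 S2| <= _).
  apply: subset_leq_card; apply/subsetP => c; rewrite inE => /set0Pn [s].
  rewrite inE => /andP [h1 h2]; have /andP [e1 e2] := block_meet h1 h2.
  by rewrite !inE e1 e2.
by rewrite cardsX expnS expn1 leq_mul // card_cyclic_offsets_meet.
Qed.

End Geometry.

Section Hamiltonian.
Variables (K : numClosedFieldType) (L d : nat).
Local Notation vec := (vec K L d).
Local Notation op := (op K L d).
Local Notation mulo := (@mulo K L d).
Local Notation app := (@app K L d).
Local Notation ido := (@ido K L d).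
Variable Q : {set site L} -> op.
Hypothesis hQ : forall A, A \in squares L 2 -> proj_op (Q A) /\ supported_on A (Q A).
Hypothesis hcomm : forall A B, A \in squares L 2 -> B \in squares L 2 ->
  mulo (Q A) (Q B) = mulo (Q B) (Q A).

Definition qfactor (X : op) :=
  exists2 a, a \in squares L 2 & X = Q a \/ X = ido - Q a.

Lemma qfactor_proj X : qfactor X -> proj_op X.
Proof. by case=> a /hQ [hQa _] [] ->; [exact: hQa | exact: proj_op_compl]. Qed.

Lemma qfactor_comm X Y : qfactor X -> qfactor Y -> mulo X Y = mulo Y X.
Proof.
case=> a a2 hX [b b2 hY]; have hab := hcomm a2 b2.
have hab' := comm_compl hab; have hba' := comm_compl (esym hab).
by case: hX hY => -> [] ->; rewrite ?hab' -?hba' // comm_compl.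
Qed.

Local Notation qcone := (pcone qfactor).

Definition Qset (s : seq {set site L}) : op := ido - prodo [seq ido - Q a | a <- s].
Definition Hset (s : seq {set site L}) : op := \sum_(a <- s) Q a.

Lemma qfactor_compl s : all (mem (squares L 2)) s ->
  {in [seq ido - Q a | a <- s], forall X, qfactor X}.
Proof. by move=> /allP h X /mapP [a /h a2 ->]; exists a => //; right. Qed.

Lemma Q_pcone a : a \in squares L 2 -> qcone (Q a).
Proof. by move=> a2; apply: pcone_F; exists a => //; left. Qed.

Lemma Qset_proj s : all (mem (squares L 2)) s -> proj_op (Qset s).
Proof. by move=> hs; apply/proj_op_compl/(prodo_proj qfactor_proj qfactor_comm)/qfactor_compl. Qed.

(* 0 <= Q_B <= H_B, from I - prod_k (I - Q_k) = sum_k Q_k prod_(j > k) (I - Q_j). *)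
Lemma Qset_pcone s : all (mem (squares L 2)) s ->
  qcone (Qset s) /\ qcone (Hset s - Qset s).
Proof.
elim: s => [|a s IH] /=.
  by rewrite /Qset /Hset big_nil /= subrr sub0r oppr0; split; exact: pcone0.
move=> /andP [a2 hs]; have [c1 c2] := IH hs.
have e1 : Qset (a :: s) = Qset s + mulo (Q a) (prodo [seq ido - Q a | a <- s]).
  by rewrite /Qset /= muloBl mul1o opprB addrCA addrC.
have e2 : Hset (a :: s) - Qset (a :: s) = (Hset s - Qset s) + mulo (Q a) (Qset s).
  rewrite e1 /Hset big_cons /Qset muloBr mulo1.
  by rewrite opprD [RHS]addrACA (addrC (\sum_(a0 <- s) Q a0)).
split; last by rewrite e2; apply: pconeD => //; exact: pconeM (Q_pcone a2) c1.
rewrite e1; apply: pconeD => //.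
apply: (pcone_prod (s := Q a :: [seq ido - Q a | a <- s])) => X.
rewrite inE => /orP [/eqP ->|]; first by exists a => //; left.
exact: qfactor_compl.
Qed.

Lemma H0_pcone : qcone (H0 Q).
Proof. by apply: pcone_sum => a; apply: Q_pcone. Qed.

Lemma H0_herm : herm_op (H0 Q).
Proof. exact: (pcone_herm qfactor_proj qfactor_comm H0_pcone). Qed.

Lemma H0_sqr : exists2 E, qcone E & mulo (H0 Q) (H0 Q) = H0 Q + E.
Proof.
exists (\sum_(a in squares L 2) \sum_(b in squares L 2 | b != a) mulo (Q a) (Q b)).
  apply: pcone_sum => a a2; apply: pcone_sum => b /andP [b2 _].
  by apply: pconeM; apply: Q_pcone.
rewrite /H0 mulo_suml -big_split /=; apply: eq_bigr => a a2.
by rewrite mulo_sumr (bigD1 a) //= (proj2 (proj1 (hQ a2))).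
Qed.

Section Perturbation.
Variables (Lstar r : nat) (w : K) (V : {set site L} -> op).
Hypothesis hT2 : TQO2 Q Lstar.
Hypothesis hr : (r <= Lstar)%N.
Hypothesis w0 : 0 <= w.
Hypothesis hV : forall A, A \in squares L r ->
  herm_op (V A) /\ supported_on A (V A) /\
  mulo (V A) (Pgs Q) = 0 /\ mulo (Pgs Q) (V A) = 0 /\ opnorm_le (V A) w.

Local Notation S := (squares L r).

Definition corner (A : {set site L}) := [pick c : site L | A == block L r c.1 c.2].

(* The square B of TQO-2 for A; it is junk ([set0]) when A is not in S(r). *)
Definition nbhd (A : {set site L}) : {set site L} :=
  if corner A is Some c then block L (r + 2) (c.1 + L - 1) (c.2 + L - 1) else set0.

Definition nbhd_squares A :=
  [seq a <- index_enum _ | (a \in squares L 2) && (a \subset nbhd A)].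
Definition QB A := Qset (nbhd_squares A).
Definition HB A := Hset (nbhd_squares A).

Lemma nbhd_squares_sub A : all (mem (squares L 2)) (nbhd_squares A).
Proof. by apply/allP => a; rewrite mem_filter => /andP [/andP []]. Qed.

Lemma corner_spec A : A \in S ->
  exists c, corner A = Some c /\ A = block L r c.1 c.2.
Proof.
move=> hA; rewrite /corner; case: pickP => [c /eqP -> | h]; first by exists c.
by case/imsetP: hA => c _ e; have := h c; rewrite e eqxx.
Qed.

Lemma nbhdE A c : corner A = Some c ->
  nbhd A = block L (r + 2) (c.1 + (L - 1)) (c.2 + (L - 1)).
Proof.
by move=> ec; rewrite /nbhd ec !addnBA // (leq_ltn_trans (leq0n _) (ltn_ord c.1)).
Qed.

Lemma QB_proj A : proj_op (QB A).
Proof. exact: Qset_proj (nbhd_squares_sub A). Qed.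

Lemma QB_pcone A : qcone (QB A) /\ qcone (HB A - QB A).
Proof. exact: Qset_pcone (nbhd_squares_sub A). Qed.

(* TQO-2 applied to [V A]: V_A P = 0 forces V_A P_B = 0, i.e. V_A Q_B = V_A. *)
Lemma V_QB A : A \in S -> mulo (V A) (QB A) = V A /\ mulo (QB A) (V A) = V A.
Proof.
move=> hA; have [hh [hs [hP _]]] := hV hA.
have [c [ec eA]] := corner_spec hA.
have h0 := hT2 hr (eq_ind _ (fun B => supported_on B (V A)) hs _ eA) hP.
have eP : prodo [seq ido - Q a | a <- nbhd_squares A] = PB Q (nbhd A).
  by rewrite /PB bigmulo_prodo.
have e1 : mulo (V A) (QB A) = V A.
  by rewrite /QB /Qset eP /nbhd ec muloBr mulo1 h0 subr0.
by split=> //; exact: herm_fixC (QB_proj A).1 hh e1.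
Qed.

Lemma sub_nbhd A : A \in S -> A \subset nbhd A.
Proof.
move=> hA; have [c [ec eA]] := corner_spec hA.
have Lpos : (0 < L)%N by exact: leq_ltn_trans (leq0n _) (ltn_ord c.1).
rewrite /nbhd ec eA; apply/subsetP => s /[!inE] /existsP [i /existsP [j /andP [h1 h2]]].
have i2 : (i.+1 < r + 2)%N by rewrite addn2 !ltnS ltnW.
have j2 : (j.+1 < r + 2)%N by rewrite addn2 !ltnS ltnW.
apply/existsP; exists (Ordinal i2); apply/existsP; exists (Ordinal j2) => /=.
have shift x y : (x + L - 1 + y.+1 = x + y + L)%N by lia.
by rewrite !shift !modnDr h1 h2.
Qed.

Definition far A A' := (A' :&: nbhd A == set0) && (A :&: nbhd A' == set0).

Lemma farC A A' : far A A' = far A' A.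
Proof. by rewrite /far andbC. Qed.

Lemma far_comm_QB A A' : A' \in S -> A' :&: nbhd A = set0 ->
  mulo (V A') (QB A) = mulo (QB A) (V A').
Proof.
move=> hA' dis; apply: comm_compl; apply: comm_prodo => Y /mapP [a ain ->].
apply: comm_compl; move: ain; rewrite mem_filter => /andP [/andP [a2 sub] _].
have [_ [hs _]] := hV hA'; have [_ hsa] := hQ a2.
apply: (supported_disjoint_comm hs hsa); apply/setP => x; rewrite !inE.
by apply/negP => /andP [x1 x2]; have := in_set0 x; rewrite -dis inE x1 (subsetP sub).
Qed.

Lemma far_comm_V A A' : A \in S -> A' \in S -> A' :&: nbhd A = set0 ->
  mulo (V A) (V A') = mulo (V A') (V A).
Proof.
move=> hA hA' dis; have [_ [hs _]] := hV hA; have [_ [hs' _]] := hV hA'.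
apply: (supported_disjoint_comm hs hs'); apply/setP => x; rewrite !inE.
apply/negP => /andP [x1 x2]; have := in_set0 x.
by rewrite -dis inE x2 (subsetP (sub_nbhd hA)).
Qed.

Lemma card_squares_le (P : pred {set site L}) (Pc : pred (site L)) :
  (forall A c, A \in S -> corner A = Some c -> A = block L r c.1 c.2 -> P A -> Pc c) ->
  (#|[set A in S | P A]| <= #|[set c | Pc c]|)%N.
Proof.
move=> h; apply: leq_trans (leq_imset_card (fun c : site L => block L r c.1 c.2) _).
apply: subset_leq_card; apply/subsetP => A /[!inE] /andP [hA hP].
have [c [ec eA]] := corner_spec hA.
by apply/imsetP; exists c => //; rewrite inE; apply: h hP.
Qed.

Lemma card_near A : A \in S ->
  (#|[set A' in S | ~~ far A A']| <= 2 * (r + (r + 2)) ^ 2)%N.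
Proof.
move=> hA; have [c0 [ec0 eA]] := corner_spec hA.
apply: leq_trans (_ : (#|[set A' in S | A' :&: nbhd A != set0] :|:
                        [set A' in S | nbhd A' :&: A != set0]| <= _)%N).
  apply: subset_leq_card; apply/subsetP => A'.
  by rewrite !inE negb_and => /andP [-> /=]; rewrite [nbhd A' :&: A]setIC.
rewrite mul2n -addnn; apply: leq_trans (leq_card_setU _ _) (leq_add _ _).
  apply: leq_trans (card_squares_le
    (Pc := fun c => block L r (c.1 + 0) (c.2 + 0) :&: nbhd A != set0) _) _.
    by move=> A' c _ _ ->; rewrite !addn0.
  by rewrite (nbhdE ec0) card_blocks_meet.
apply: leq_trans (card_squares_le (Pc := fun c =>
    block L (r + 2) (c.1 + (L - 1)) (c.2 + (L - 1)) :&: block L r c0.1 c0.2 != set0) _) _.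
  by move=> A' c _ ec _; rewrite -(nbhdE ec) -eA.
by rewrite [(r + (r + 2))%N]addnC card_blocks_meet.
Qed.

Definition nbhd_mult (a : {set site L}) := #|[set A in S | a \subset nbhd A]|.

Lemma nbhd_mult_le a : a \in squares L 2 -> (nbhd_mult a <= (r + 3) ^ 2)%N.
Proof.
case/imsetP => a0 _ ea.
have corner_in (p : nat) : a0 \in block L p.+1 a0.1 a0.2.
  rewrite inE; apply/existsP; exists ord0; apply/existsP; exists ord0.
  by rewrite !addn0 !modn_small ?eqxx.
apply: leq_trans (card_squares_le (Pc := fun c => block L (r + 2) (c.1 + (L - 1))
    (c.2 + (L - 1)) :&: block L 1 a0.1 a0.2 != set0) _) _; last first.
  by rewrite (_ : r + 3 = r + 2 + 1)%N ?card_blocks_meet // -addnA.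
move=> A c _ ec _ sub; apply/set0Pn; exists a0.
by rewrite inE corner_in -(nbhdE ec) (subsetP sub) // ea corner_in.
Qed.

Lemma sum_HB : \sum_(A in S) HB A = \sum_(a in squares L 2) Q a *+ nbhd_mult a.
Proof.
rewrite /HB /Hset; under eq_bigr do rewrite /nbhd_squares big_filter.
rewrite (exchange_big_dep (fun a => a \in squares L 2)) /=; last by move=> A a _ /andP [].
apply: eq_bigr => a a2; rewrite -sumr_const; apply: eq_bigl => A.
by rewrite !inE a2.
Qed.

Definition QBsum := \sum_(A in S) QB A.

Lemma QBsum_pcone : qcone QBsum.
Proof. by apply: pcone_sum => A _; case: (QB_pcone A). Qed.

(* Each 2-square lies in at most (r+3)^2 of the neighbourhoods, so
   sum_A Q_(B_A) <= sum_A H_(B_A) <= (r+3)^2 H_0. *)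
Lemma QBsum_le_H0 : exists2 D, qcone D & H0 Q *+ (r + 3) ^ 2 = QBsum + D.
Proof.
exists (\sum_(A in S) (HB A - QB A) +
        \sum_(a in squares L 2) Q a *+ ((r + 3) ^ 2 - nbhd_mult a)).
  apply: pconeD; first by apply: pcone_sum => A _; case: (QB_pcone A).
  by apply: pcone_sum => a a2; apply/pconeMn/Q_pcone.
rewrite addrA /QBsum -big_split /=.
under eq_bigr do rewrite addrC subrK.
rewrite sum_HB -big_split /= /H0 -sumrMnl.
by apply: eq_bigr => a a2; rewrite -mulrnDr subnKC // nbhd_mult_le.
Qed.

Lemma qform_QBsum_le psi :
  qform psi QBsum <= vnorm2 (app (H0 Q) psi) *+ (r + 3) ^ 2.
Proof.
have [D cD eD] := QBsum_le_H0; have [E cE eE] := H0_sqr.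
apply: le_trans (qform_le_addr qfactor_proj qfactor_comm _ psi cD) _.
rewrite -eD qformMn; apply: ler_wMn2r.
rewrite (vnorm2_app_herm H0_herm) eE.
exact: (qform_le_addr qfactor_proj qfactor_comm (H0 Q) psi cE).
Qed.

Lemma vnorm2_QBsum_le psi :
  vnorm2 (app QBsum psi) <= vnorm2 (app (H0 Q) psi) *+ ((r + 3) ^ 2 * (r + 3) ^ 2).
Proof.
have [D cD eD] := QBsum_le_H0.
apply: le_trans (vnorm2_le_addr qfactor_proj qfactor_comm psi QBsum_pcone cD) _.
have hHM : herm_op (H0 Q *+ (r + 3) ^ 2).
  exact/(pcone_herm qfactor_proj qfactor_comm)/pconeMn/H0_pcone.
rewrite -eD (vnorm2_app_herm hHM) (vnorm2_app_herm H0_herm).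
by rewrite muloMnl muloMnr !qformMn -mulrnA.
Qed.

Lemma vnorm2_V_le A psi : A \in S ->
  vnorm2 (app (V A) psi) <= w ^+ 2 * qform psi (QB A).
Proof.
move=> hA; have [e1 _] := V_QB hA; have [_ [_ [_ [_ hn]]]] := hV hA.
by rewrite -e1 app_mulo -(vnorm2_app_proj (QB_proj A)); apply: opnorm_vnorm2.
Qed.

Lemma QB_mulo_proj A A' : proj_op (mulo (QB A) (QB A')).
Proof.
apply: proj_mulo; [exact: QB_proj | exact: QB_proj |].
exact: (pcone_comm qfactor_comm (proj1 (QB_pcone A)) (proj1 (QB_pcone A'))).
Qed.

(* For far squares, V_A V_A' = R V_A V_A' R with R = Q_(B_A) Q_(B_A'), so the
   cross term only sees R psi. *)
Lemma far_vdot_le A A' psi : A \in S -> A' \in S -> far A A' ->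
  `|vdot (app (V A) psi) (app (V A') psi)|
    <= w ^+ 2 * qform psi (mulo (QB A) (QB A')) *+ 2.
Proof.
move=> hA hA' /andP [/eqP far1 _].
have [a1 b1] := V_QB hA; have [a2 b2] := V_QB hA'.
have [hh1 [_ [_ [_ hn1]]]] := hV hA; have [hh2 [_ [_ [_ hn2]]]] := hV hA'.
have hR := QB_mulo_proj A A'; have hRh := proj1 hR.
set R := mulo (QB A) (QB A') in hR hRh *.
have e : vdot (app (V A) psi) (app (V A') psi) =
         vdot (app (V A) (app R psi)) (app (V A') (app R psi)).
  rewrite !herm_vdot // -!app_mulo; congr (vdot psi (app _ psi)).
  by rewrite (mulo_sandwich a1 b1 a2 b2 (far_comm_V hA hA' far1) (far_comm_QB hA' far1)) !muloA.
rewrite e; apply: le_trans (norm_vdot_le _ _) _.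
by rewrite mulr2n -(vnorm2_app_proj hR); apply: lerD; apply: opnorm_vnorm2.
Qed.

Lemma sum_vnorm2_V_le psi :
  \sum_(A in S) vnorm2 (app (V A) psi) <= w ^+ 2 * (vnorm2 (app (H0 Q) psi) *+ (r + 3) ^ 2).
Proof.
apply: le_trans (_ : \sum_(A in S) w ^+ 2 * qform psi (QB A) <= _).
  by apply: ler_sum => A; apply: vnorm2_V_le.
by rewrite -mulr_sumr -qform_sum ler_wpM2l ?exprn_ge0 // qform_QBsum_le.
Qed.

Lemma near_pairs_le psi (n := fun A => vnorm2 (app (V A) psi)) :
  \sum_(A in S) \sum_(A' in S | ~~ far A A') (n A + n A')
    <= (\sum_(A in S) n A) *+ (4 * (r + (r + 2)) ^ 2).
Proof.
have n0 A : 0 <= n A by exact: vnorm2_ge0.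
have near1 : \sum_(A in S) \sum_(A' in S | ~~ far A A') n A
               <= (\sum_(A in S) n A) *+ (2 * (r + (r + 2)) ^ 2).
  by rewrite -sumrMnl; apply: ler_sum => A hA; apply: card_sum_le => //; apply: card_near.
have near2 : \sum_(A in S) \sum_(A' in S | ~~ far A A') n A'
               <= (\sum_(A in S) n A) *+ (2 * (r + (r + 2)) ^ 2).
  rewrite (exchange_big_dep (fun A' => A' \in S)) /=; last by move=> ? ? _ /andP [].
  rewrite -sumrMnl; apply: ler_sum => A' hA'.
  rewrite (eq_bigl (fun A => (A \in S) && ~~ far A' A)); last first.
    by move=> A; rewrite hA' farC.
  by apply: card_sum_le => //; apply: card_near.
under eq_bigr do rewrite big_split /=.
rewrite big_split /=; apply: le_trans (lerD near1 near2) _.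
by rewrite -mulrnDr addnn -mul2n mulnA.
Qed.

Lemma far_pairs_le psi :
  \sum_(A in S) \sum_(A' in S) w ^+ 2 * qform psi (mulo (QB A) (QB A')) *+ 2
    <= w ^+ 2 * vnorm2 (app (H0 Q) psi) *+ ((r + 3) ^ 2 * (r + 3) ^ 2 * 2).
Proof.
have eX : \sum_(A in S) \sum_(A' in S) qform psi (mulo (QB A) (QB A')) =
          vnorm2 (app QBsum psi).
  rewrite (vnorm2_app_herm (pcone_herm qfactor_proj qfactor_comm QBsum_pcone)).
  rewrite /QBsum mulo_suml qform_sum; apply: eq_bigr => A _.
  by rewrite mulo_sumr qform_sum.
under eq_bigr do rewrite sumrMnl -mulr_sumr.
rewrite sumrMnl -mulr_sumr eX mulrnA; apply: ler_wMn2r.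
by rewrite -mulrnAr ler_wpM2l ?exprn_ge0 // vnorm2_QBsum_le.
Qed.

Lemma row_vdot_le psi A (x := fun A => app (V A) psi) : A \in S ->
  \sum_(A' in S) `|vdot (x A) (x A')| <=
    \sum_(A' in S | ~~ far A A') (vnorm2 (x A) + vnorm2 (x A')) +
    \sum_(A' in S) w ^+ 2 * qform psi (mulo (QB A) (QB A')) *+ 2.
Proof.
move=> hA; rewrite (bigID (far A)) /= addrC; apply: lerD.
  by apply: ler_sum => A' _; exact: norm_vdot_le.
apply: le_trans (_ : \sum_(A' in S | far A A') w ^+ 2 * qform psi (mulo (QB A) (QB A')) *+ 2 <= _).
  by apply: ler_sum => A' /andP [hA' hf]; exact: far_vdot_le.
rewrite [X in _ <= X](bigID (far A)) /= lerDl; apply: sumr_ge0 => A' _.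
apply/mulrn_wge0/mulr_ge0; first exact: exprn_ge0.
by rewrite -(vnorm2_app_proj (QB_mulo_proj A A')) vnorm2_ge0.
Qed.

Lemma perturbation_vnorm2_le psi :
  vnorm2 (app (\sum_(A in S) V A) psi) <= w ^+ 2 * vnorm2 (app (H0 Q) psi) *+
    (4 * (r + (r + 2)) ^ 2 * (r + 3) ^ 2 + (r + 3) ^ 2 * (r + 3) ^ 2 * 2).
Proof.
rewrite app_sum; apply: le_trans (vnorm2_sum_le _ _) _.
apply: le_trans (ler_sum _ (row_vdot_le psi)) _.
rewrite big_split /= mulrnDr; apply: lerD (far_pairs_le psi).
apply: le_trans (near_pairs_le psi) _.
rewrite (mulnC (4 * _)) mulrnA; apply: ler_wMn2r.
by rewrite -mulrnAr sum_vnorm2_V_le.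
Qed.

End Perturbation.
End Hamiltonian.

(* The bound needs only TQO-2, through V_A Q_(B_A) = V_A. *)
Theorem mainTheorem6 (K : numClosedFieldType) (d : nat) :
  exists Cst : K,
  forall (L Lstar : nat) (Q : {set site L} -> op K L d),
    (forall A, A \in squares L 2 -> proj_op (Q A) /\ supported_on A (Q A)) ->
    (forall A B, A \in squares L 2 -> B \in squares L 2 ->
       mulo (Q A) (Q B) = mulo (Q B) (Q A)) ->
    Pgs Q != 0 ->
    TQO1 Q Lstar -> TQO2 Q Lstar ->
  forall (r : nat), (1 <= r <= Lstar)%N ->
  forall (w : K) (V : {set site L} -> op K L d),
    0 <= w ->
    (forall A, A \in squares L r ->
       herm_op (V A) /\ supported_on A (V A) /\
       mulo (V A) (Pgs Q) = 0 /\ mulo (Pgs Q) (V A) = 0 /\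
       opnorm_le (V A) w) ->
  forall psi : vec K L d,
    vnorm (app (\sum_(A in squares L r) V A) psi)
      <= Cst * w * r%:R ^+ 2 * vnorm (app (H0 Q) psi).
Proof.
exists 40%:R => L Lstar Q hQ hcomm _ _ hT2 r /andP [r1 hr] w V w0 hV psi.
apply: vnorm_le_sqr; first by rewrite !mulr_ge0 ?ler0n ?exprn_ge0.
apply: le_trans (perturbation_vnorm2_le hQ hcomm hT2 hr w0 hV psi) _.
have -> : (40%:R * w * r%:R ^+ 2) ^+ 2 * vnorm2 (app (H0 Q) psi) =
          w ^+ 2 * vnorm2 (app (H0 Q) psi) *+ (40 * r ^ 2) ^ 2.
  by rewrite -mulr_natr; ring.
by apply: ler_wpMn2l; [rewrite mulr_ge0 ?exprn_ge0 ?vnorm2_ge0 | nia].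
Qed.
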